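(* Let $M,K$ be real symmetric positive definite $N\times N$ matrices, $\Delta t>0$, and let $(q_n)_{n\ge0}$ satisfy the implicit Euler recursion $(M+\Delta tK)q_{n+1}=Mq_n+\Delta t f_{n+1}$, i.e. $(\frac{M}{\Delta t}+K)q_{n+1}=\frac M{\Delta t}q_n+f_{n+1}$, for given vectors $f_{n+1}\in\mathbb{R}^N$. Write $\|q\|_\zeta^2:=q^T(\frac M{\Delta t}+K)q$ and $\|f\|_{H^{-1}(\Omega)}:=\sqrt{f^TK^{-1}f}$. Then for every $n\ge0$, $$\|q_{n+1}\|_\zeta\le\|q_n\|_\zeta+\|f_{n+1}\|_{H^{-1}(\Omega)}.$$
   Context: In the paper $M$ and $K$ are the finite-element mass and stiffness matrices $M_{ij}=\int_\Omega\varphi_i\varphi_j\mu$, $K_{ij}=\int_\Omega(\nabla\varphi_i)^Ta\nabla\varphi_j$ of a parabolic problem $\mu\partial_tu-\mathrm{div}(a\nabla u)=g$ with $f_{n,i}=\int_\Omega\varphi_ig(\cdot,n\Delta t)$; only their symmetry and positive definiteness are used. *)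

From HB Require Import structures.
From mathcomp Require Import all_boot all_order all_algebra.
From mathcomp Require Import reals.
Set Implicit Arguments. Unset Strict Implicit. Unset Printing Implicit Defensive.
Import Order.TTheory GRing.Theory Num.Theory.
Local Open Scope ring_scope.

Definition spd (R : realType) (N : nat) (A : 'M[R]_N) : Prop :=
  A^T = A /\ forall v : 'cV[R]_N, v != 0 -> 0 < (v^T *m A *m v) 0 0.

Definition zeta_norm (R : realType) (N : nat) (dt : R) (M K : 'M[R]_N)
  (q : 'cV[R]_N) : R :=
  Num.sqrt ((q^T *m (dt^-1 *: M + K) *m q) 0 0).

Definition Hm1_norm (R : realType) (N : nat) (K : 'M[R]_N) (f : 'cV[R]_N) : R :=
  Num.sqrt ((f^T *m invmx K *m f) 0 0).

(* Energy estimate: with A := M/dt + K, the scheme reads A q_{n+1} = (M/dt) q_n + f_{n+1}.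
   Testing it against q_{n+1} and bounding both cross terms by the arithmetic-geometric
   inequality, (M/dt) in its own energy and q_{n+1}^T f = (K q_{n+1})^T K^{-1} f in the
   K^{-1} energy, gives ||q_{n+1}||_zeta^2 <= ||q_n||_zeta^2 + ||f_{n+1}||^2, whose square
   root is the claim. *)
From HB Require Import structures.
From mathcomp Require Import all_boot all_order all_algebra.
From mathcomp Require Import reals.
From mathcomp Require Import lra.
Set Implicit Arguments. Unset Strict Implicit. Unset Printing Implicit Defensive.
Import Order.TTheory GRing.Theory Num.Theory.
Local Open Scope ring_scope.

Section BilinearForm.
Variables (R : comNzRingType) (N : nat).
Implicit Types (S T : 'M[R]_N) (x y z : 'cV[R]_N).

Definition bform x S y : R := (x^T *m S *m y) 0 0.

Lemma bform_sym S x y : S^T = S -> bform y S x = bform x S y.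
Proof.
move=> S_sym; rewrite /bform.
have -> : (y^T *m S *m x) 0 0 = ((y^T *m S *m x)^T) 0 0 by rewrite [RHS]mxE.
by rewrite !trmx_mul trmxK S_sym mulmxA.
Qed.

Lemma bformDl x y S z : bform (x + y) S z = bform x S z + bform y S z.
Proof. by rewrite /bform linearD /= !mulmxDl mxE. Qed.

Lemma bformDr x S y z : bform x S (y + z) = bform x S y + bform x S z.
Proof. by rewrite /bform !mulmxDr mxE. Qed.

Lemma bformNl x S y : bform (- x) S y = - bform x S y.
Proof. by rewrite /bform linearN /= !mulNmx mxE. Qed.

Lemma bformNr x S y : bform x S (- y) = - bform x S y.
Proof. by rewrite /bform mulmxN mxE. Qed.

Lemma bformDm x S T y : bform x (S + T) y = bform x S y + bform x T y.
Proof. by rewrite /bform mulmxDr mulmxDl mxE. Qed.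

Lemma bformZm x c S y : bform x (c *: S) y = c * bform x S y.
Proof. by rewrite /bform -scalemxAr -scalemxAl mxE. Qed.

Lemma bform_mulmxl x S y : bform x S y = (x^T *m (S *m y)) 0 0.
Proof. by rewrite /bform mulmxA. Qed.

End BilinearForm.

Section SemiDefinite.
Variables (R : realFieldType) (N : nat).
Implicit Types (S : 'M[R]_N) (x y : 'cV[R]_N).

Definition psd S := S^T = S /\ forall x, 0 <= bform x S x.

Lemma psd_bform_le S x y : psd S -> 2 * bform x S y <= bform x S x + bform y S y.
Proof.
move=> [S_sym S_ge0]; have := S_ge0 (x - y).
rewrite bformDl !bformDr !bformNl !bformNr opprK (bform_sym x y S_sym); lra.
Qed.

Lemma psdZ c S : 0 <= c -> psd S -> psd (c *: S).
Proof.
move=> c_ge0 [S_sym S_ge0]; split; first by rewrite linearZ /= S_sym.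
by move=> x; rewrite bformZm mulr_ge0.
Qed.

Lemma psd_invmx S : psd S -> S \in unitmx -> psd (invmx S).
Proof.
move=> [S_sym S_ge0] S_unit; have Si_sym : (invmx S)^T = invmx S by rewrite trmx_inv S_sym.
split=> // x; have := S_ge0 (invmx S *m x).
by rewrite /bform trmx_mul Si_sym -!mulmxA (mulmxA S) mulmxV // mul1mx mulmxA.
Qed.

Lemma bform_mulmx_invmx S x y :
  S^T = S -> S \in unitmx -> bform (S *m x) (invmx S) y = (x^T *m y) 0 0.
Proof. by move=> S_sym S_unit; rewrite /bform trmx_mul S_sym -(mulmxA _ S) mulmxV ?mulmx1. Qed.

Lemma implicit_step_energy B K x y g :
  psd B -> psd K -> K \in unitmx -> (B + K) *m x = B *m y + g ->
  bform x (B + K) x <= bform y B y + bform g (invmx K) g.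
Proof.
move=> B_psd K_psd K_unit step; have [K_sym _] := K_psd.
have tested : bform x (B + K) x = bform x B y + (x^T *m g) 0 0.
  by rewrite bform_mulmxl step mulmxDr mxE -bform_mulmxl.
have cross_B := psd_bform_le x y B_psd.
have cross_K := psd_bform_le (K *m x) g (psd_invmx K_psd K_unit).
rewrite !bform_mulmx_invmx // -bform_mulmxl in cross_K.
move: tested cross_B cross_K; rewrite bformDm; lra.
Qed.

End SemiDefinite.

Lemma spd_psd (R : realType) (N : nat) (S : 'M[R]_N) : spd S -> psd S.
Proof.
move=> [S_sym S_gt0]; split=> // x; have [->|x_neq0] := eqVneq x 0.
  by rewrite /bform mulmx0 mxE.
exact/ltW/S_gt0.
Qed.

Lemma spd_unitmx (R : realType) (N : nat) (S : 'M[R]_N) : spd S -> S \in unitmx.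
Proof.
move=> [_ S_gt0]; rewrite unitmxE unitfE; apply/negP => /det0P [v v_neq0 vS].
have := S_gt0 v^T; rewrite trmxK vS !mul0mx mxE ltxx.
by rewrite -(inj_eq (@trmx_inj _ _ _)) trmxK trmx0 v_neq0 => /(_ isT).
Qed.

Lemma sqrtrD_le (R : rcfType) (a b : R) :
  0 <= a -> 0 <= b -> Num.sqrt (a + b) <= Num.sqrt a + Num.sqrt b.
Proof.
move=> a_ge0 b_ge0.
rewrite -ler_sqr ?nnegrE ?addr_ge0 ?sqrtr_ge0 // sqrrD !sqr_sqrtr ?addr_ge0 //.
by rewrite -addrA lerD2l lerDr mulrn_wge0 ?mulr_ge0 ?sqrtr_ge0.
Qed.

Theorem mainTheorem3 (R : realType) (N : nat) (M K : 'M[R]_N) (dt : R)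
  (q f : nat -> 'cV[R]_N) :
  spd M -> spd K -> 0 < dt ->
  (forall n : nat, (M + dt *: K) *m q n.+1 = M *m q n + dt *: f n.+1) ->
  forall n : nat,
    zeta_norm dt M K (q n.+1) <= zeta_norm dt M K (q n) + Hm1_norm K (f n.+1).
Proof.
move=> M_spd K_spd dt_gt0 scheme n.
set B := dt^-1 *: M; have dt_neq0 : dt != 0 by rewrite gt_eqF.
have B_psd : psd B by apply: psdZ (spd_psd M_spd); rewrite invr_ge0 ltW.
have K_psd := spd_psd K_spd; have K_unit := spd_unitmx K_spd.
have step : (B + K) *m q n.+1 = B *m q n + f n.+1.
  apply: (scalerI dt_neq0); rewrite scalemxAl !scalerDr scalerA mulfV // scale1r scheme.
  by rewrite -scalemxAl scalerA mulfV // scale1r.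
have energy := implicit_step_energy B_psd K_psd K_unit step.
have B_le_A : bform (q n) B (q n) <= bform (q n) (B + K) (q n).
  by rewrite bformDm lerDl (proj2 K_psd).
rewrite /zeta_norm /Hm1_norm -/B -!/(bform _ _ _).
apply: le_trans (ler_wsqrtr (le_trans energy (lerD B_le_A (lexx _)))) _.
apply: sqrtrD_le; last exact: (proj2 (psd_invmx K_psd K_unit)).
by rewrite bformDm addr_ge0 ?(proj2 B_psd) ?(proj2 K_psd).
Qed.
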